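(* Let $M$ be the monoid (algebra in sets) generated by $a,b,d,e,f,h,i,j,k,l,n,o,p$ subject to the relations $ba=ed$, $ea=fb$, $hb=id$, $jb=kd$, $oi=pk$, $ej=ph$, $le=ek=pi$, $nf=oh=pj$. Then $M$ is basic-set, i.e. for all $u,v,x\in M$, $ux=vx$ implies $u=v$.
   Context: For an associative algebra viewed as an operad concentrated in arity $1$, the basic-set condition (injectivity of $\nu\mapsto\gamma(\nu;\nu_1)$) is right cancellativity of the underlying monoid. *)

(* The monoid M = <a,b,d,e,f,h,i,j,k,l,n,o,p | relations>
   is presented as words (lists of generators; concatenation = product,
   [x;y] = xy) modulo the monoid congruence generated by the relations. *)
From Stdlib Require Import List.
Import ListNotations.

Inductive gen : Type :=
  | ga | gb | gd | ge | gf | gh | gi | gj | gk | gl | gn | go | gp.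

Definition word := list gen.

Inductive rel0 : word -> word -> Prop :=
  | r_ba_ed : rel0 [gb; ga] [ge; gd]
  | r_ea_fb : rel0 [ge; ga] [gf; gb]
  | r_hb_id : rel0 [gh; gb] [gi; gd]
  | r_jb_kd : rel0 [gj; gb] [gk; gd]
  | r_oi_pk : rel0 [go; gi] [gp; gk]
  | r_ej_ph : rel0 [ge; gj] [gp; gh]
  | r_le_ek : rel0 [gl; ge] [ge; gk]
  | r_ek_pi : rel0 [ge; gk] [gp; gi]
  | r_nf_oh : rel0 [gn; gf] [go; gh]
  | r_oh_pj : rel0 [go; gh] [gp; gj].

Inductive mcong : word -> word -> Prop :=
  | mc_step : forall u v s t, rel0 s t -> mcong (u ++ s ++ v) (u ++ t ++ v)
  | mc_refl : forall w, mcong w w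
  | mc_sym : forall w1 w2, mcong w1 w2 -> mcong w2 w1
  | mc_trans : forall w1 w2 w3, mcong w1 w2 -> mcong w2 w3 -> mcong w1 w3.

(* The free monoid on the generators acts on the right on stacks of
   letters: pushing a generator onto a stack replaces its top three letters
   by the least word, in a suitable order, of their class in M.  Running the
   empty stack along a word yields a word equal to it in M; the action
   respects the defining relations, hence factors through M; and each
   generator acts injectively on stacks whose top two letters are in normal
   form, which is the case for every stack produced by the action.  As the
   action only reads the top two letters of a stack, these facts reduce to
   finite checks on stacks of length at most two.  Right cancellation
   follows: if ux = vx in M, then x maps the stacks of u and v to the same
   stack, so these stacks coincide and u = v in M. *)

From Stdlib Require Import List Arith Lia Bool.
Import ListNotations.

Lemma app_inj_length (A : Type) (x y x' y' : list A) :
  length x = length x' -> x ++ y = x' ++ y' -> x = x' /\ y = y'.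
Proof.
  revert x'; induction x as [|a x IH]; intros [|a' x'] Hl E;
    simpl in *; try discriminate; auto.
  injection E as -> E. destruct (IH x') as [-> ->]; auto.
Qed.

Lemma mcong_app_l (z u v : word) : mcong u v -> mcong (z ++ u) (z ++ v).
Proof.
  induction 1.
  - rewrite !(app_assoc z u). now constructor.
  - apply mc_refl.
  - now apply mc_sym.
  - eapply mc_trans; eassumption.
Qed.

Lemma mcong_app_r (z u v : word) : mcong u v -> mcong (u ++ z) (v ++ z).
Proof.
  induction 1.
  - rewrite <- !app_assoc. now constructor.
  - apply mc_refl.
  - now apply mc_sym.
  - eapply mc_trans; eassumption.
Qed.

Lemma mcong_rel0 (s t : word) : rel0 s t -> mcong s t.
Proof.
  intros H. pose proof (mc_step [] [] s t H) as E.
  now rewrite !app_nil_r in E.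
Qed.

Lemma mcong_length (u v : word) : mcong u v -> length u = length v.
Proof.
  induction 1; try congruence.
  rewrite !length_app. destruct H; reflexivity.
Qed.

Section RightCancellation.

Variables (state : Type) (act : state -> gen -> state) (init : state).
Variables (good : state -> Prop) (read : state -> word).

Hypothesis act_rel0 :
  forall s t P, good P -> rel0 s t -> fold_left act s P = fold_left act t P.
Hypothesis good_init : good init.
Hypothesis good_act : forall P g, good P -> good (act P g).
Hypothesis act_inj :
  forall P P' g, good P -> good P' -> act P g = act P' g -> P = P'.
Hypothesis mcong_read : forall w, mcong w (read (fold_left act w init)).

Lemma good_fold (w : word) (P : state) : good P -> good (fold_left act w P).
Proof.
  revert P; induction w as [|g w IH]; simpl; auto.
Qed.

Lemma fold_act_mcong (u v : word) :
  mcong u v -> fold_left act u init = fold_left act v init.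
Proof.
  induction 1; try congruence.
  rewrite !fold_left_app. f_equal.
  apply act_rel0; [apply good_fold|]; assumption.
Qed.

Lemma fold_act_inj (x : word) (P P' : state) :
  good P -> good P' -> fold_left act x P = fold_left act x P' -> P = P'.
Proof.
  revert P P'; induction x as [|g x IH]; simpl; intros P P' HP HP' E; auto.
  apply (act_inj P P' g); auto.
Qed.

Theorem mcong_cancel_r (u v x : word) : mcong (u ++ x) (v ++ x) -> mcong u v.
Proof.
  intros H. apply fold_act_mcong in H. rewrite !fold_left_app in H.
  apply fold_act_inj in H; try apply good_fold; auto.
  eapply mc_trans; [apply mcong_read|]. rewrite H.
  apply mc_sym, mcong_read.
Qed.

End RightCancellation.

Definition gen_eq_dec : forall a b : gen, {a = b} + {a <> b}.
Proof. decide equality. Defined.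

Definition word_eq_dec : forall u v : word, {u = v} + {u <> v} :=
  list_eq_dec gen_eq_dec.

Definition word_eqb (u v : word) : bool := if word_eq_dec u v then true else false.

Lemma word_eqb_eq (u v : word) : word_eqb u v = true <-> u = v.
Proof. unfold word_eqb; destruct (word_eq_dec u v); split; congruence. Qed.

Definition gens : list gen := [ga; gb; gd; ge; gf; gh; gi; gj; gk; gl; gn; go; gp].

Lemma in_gens (g : gen) : In g gens.
Proof. destruct g; simpl; tauto. Qed.

Definition relations : list (word * word) :=
  [([gb; ga], [ge; gd]); ([ge; ga], [gf; gb]); ([gh; gb], [gi; gd]);
   ([gj; gb], [gk; gd]); ([go; gi], [gp; gk]); ([ge; gj], [gp; gh]);
   ([gl; ge], [ge; gk]); ([ge; gk], [gp; gi]); ([gn; gf], [go; gh]);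
   ([go; gh], [gp; gj])].

Lemma in_relations (s t : word) : In (s, t) relations <-> rel0 s t.
Proof.
  split.
  - simpl; intros H.
    repeat (destruct H as [H | H]; [injection H as <- <-; constructor |]).
    contradiction.
  - destruct 1; simpl; tauto.
Qed.

Definition rewrites (w : word) : list word :=
  flat_map (fun st => (if word_eqb w (fst st) then [snd st] else [])
                        ++ (if word_eqb w (snd st) then [fst st] else [])) relations.

Lemma rewrites_mcong (w w' : word) : In w' (rewrites w) -> mcong w w'.
Proof.
  unfold rewrites; rewrite in_flat_map.
  intros [[s t] [Hst Hw']]; apply in_relations, mcong_rel0 in Hst; simpl in Hw'.
  apply in_app_or in Hw' as [Hw' | Hw'].
  - destruct (word_eqb w s) eqn:E; [|contradiction].
    apply word_eqb_eq in E as ->. now destruct Hw' as [<- | []].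
  - destruct (word_eqb w t) eqn:E; [|contradiction].
    apply word_eqb_eq in E as ->. destruct Hw' as [<- | []]. now apply mc_sym.
Qed.

Fixpoint neighbours (w : word) : list word :=
  match w with
  | [] => []
  | x :: w' => map (cons x) (neighbours w') ++
      match w' with
      | y :: r => map (fun q => q ++ r) (rewrites [x; y])
      | [] => []
      end
  end.

Lemma neighbours_mcong (w w' : word) : In w' (neighbours w) -> mcong w w'.
Proof.
  revert w'; induction w as [|x w IH]; simpl; intros w' H; [contradiction|].
  apply in_app_or in H as [H | H].
  - apply in_map_iff in H as [v [<- Hv]].
    apply (mcong_app_l [x]); auto.
  - destruct w as [|y r]; [contradiction|].
    apply in_map_iff in H as [q [<- Hq]].
    apply (mcong_app_r r [x; y]), rewrites_mcong, Hq.
Qed.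

Fixpoint reachable (n : nat) (w : word) : list word :=
  match n with
  | 0 => [w]
  | S n => let L := reachable n w in nodup word_eq_dec (L ++ flat_map neighbours L)
  end.

Lemma reachable_mcong (n : nat) (w w' : word) : In w' (reachable n w) -> mcong w w'.
Proof.
  revert w'; induction n as [|n IH]; simpl; intros w' H.
  - destruct H as [<- | []]; apply mc_refl.
  - apply nodup_In, in_app_or in H as [H | H]; auto.
    apply in_flat_map in H as [v [Hv Hw']].
    eapply mc_trans; [apply IH, Hv | apply neighbours_mcong, Hw'].
Qed.

(* The order on letters is tuned so that normalising the top three letters
   of a stack suffices (with the constructor order it does not); the finite
   checks below confirm it. *)
Definition rank (g : gen) : nat :=
  match g with
  | gh => 0 | gb => 1 | ge => 2 | gl => 3 | gi => 4 | ga => 5 | gk => 6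
  | gn => 7 | gj => 8 | gp => 9 | go => 10 | gf => 11 | gd => 12
  end.

Fixpoint lex_ltb (u v : word) : bool :=
  match u, v with
  | x :: u', y :: v' => (rank x <? rank y) || ((rank x =? rank y) && lex_ltb u' v')
  | _, _ => false
  end.

Definition least (w : word) (L : list word) : word :=
  fold_left (fun m x => if lex_ltb (rev x) (rev m) then x else m) L w.

Lemma least_in (L : list word) (w : word) : least w L = w \/ In (least w L) L.
Proof.
  unfold least; revert w; induction L as [|x L IH]; simpl; intros w; auto.
  destruct (lex_ltb (rev x) (rev w));
    [destruct (IH x) as [-> | H] | destruct (IH w) as [-> | H]]; auto.
Qed.

Definition nf (w : word) : word := least w (reachable 4 w).

Lemma mcong_nf (w : word) : mcong w (nf w).
Proof.
  unfold nf; destruct (least_in (reachable 4 w) w) as [-> | H].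
  - apply mc_refl.
  - eapply reachable_mcong, H.
Qed.

Lemma length_nf (w : word) : length (nf w) = length w.
Proof. symmetry; apply mcong_length, mcong_nf. Qed.

(* A stack is a word read backwards: its head is the last letter. *)
Definition act (P : word) (g : gen) : word :=
  rev (nf (rev (firstn 2 P) ++ [g])) ++ skipn 2 P.

Lemma act_mcong (P : word) (g : gen) : mcong (rev P ++ [g]) (rev (act P g)).
Proof.
  unfold act. rewrite rev_app_distr, rev_involutive.
  rewrite <- (firstn_skipn 2 P) at 1. rewrite rev_app_distr, <- app_assoc.
  apply mcong_app_l, mcong_nf.
Qed.

Lemma length_act (P : word) (g : gen) : length (act P g) = S (length P).
Proof.
  unfold act.
  rewrite length_app, length_rev, length_nf, length_app, length_rev,
    length_firstn, length_skipn.
  destruct (Nat.min_spec 2 (length P)) as [[? ->] | [? ->]]; simpl; lia.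
Qed.

Lemma act_app (M R : word) (g : gen) :
  2 <= length M -> act (M ++ R) g = act M g ++ R.
Proof.
  intros HM; unfold act.
  rewrite firstn_app, skipn_app, <- app_assoc.
  replace (2 - length M) with 0 by lia. now rewrite app_nil_r.
Qed.

Lemma fold_act_app (s M R : word) :
  2 <= length M -> fold_left act s (M ++ R) = fold_left act s M ++ R.
Proof.
  revert M; induction s as [|g s IH]; simpl; intros M HM; auto.
  rewrite act_app by exact HM. apply IH. rewrite length_act; lia.
Qed.

Lemma mcong_rev_fold_act (w : word) : mcong w (rev (fold_left act w [])).
Proof.
  induction w as [|g w IH] using rev_ind; [apply mc_refl|].
  rewrite fold_left_app; simpl.
  eapply mc_trans; [apply mcong_app_r, IH | apply act_mcong].
Qed.

Definition top_normalb (P : word) : bool :=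
  word_eqb (nf (rev (firstn 2 P))) (rev (firstn 2 P)).

Lemma top_normalb_app (M R : word) :
  2 <= length M -> top_normalb (M ++ R) = top_normalb M.
Proof.
  intros HM; unfold top_normalb.
  rewrite firstn_app. replace (2 - length M) with 0 by lia. now rewrite app_nil_r.
Qed.

Definition short_stacks : list word :=
  [] :: map (fun g => [g]) gens ++ flat_map (fun y => map (fun z => [y; z]) gens) gens.

Lemma in_short_stacks (P : word) : length P <= 2 -> In P short_stacks.
Proof.
  destruct P as [|y [|z [|w P]]]; intros H; [now left | | | simpl in H; lia];
    right; apply in_or_app.
  - left; apply (in_map (fun g => [g])), in_gens.
  - right; apply in_flat_map; exists y; split; [apply in_gens|].
    apply (in_map (fun z => [y; z])), in_gens.
Qed.

Lemma split_long_stack (P : word) :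
  2 < length P -> exists M R, P = M ++ R /\ length M = 2.
Proof.
  intros H; exists (firstn 2 P), (skipn 2 P).
  rewrite firstn_skipn, length_firstn; split; [reflexivity | lia].
Qed.

Definition injective_onb (f : word -> word) (L : list word) : bool :=
  let G := map (fun x => (x, f x)) L in
  forallb (fun p => forallb (fun q =>
    negb (word_eqb (snd p) (snd q)) || word_eqb (fst p) (fst q)) G) G.

Lemma injective_onb_inj (f : word -> word) (L : list word) (x y : word) :
  injective_onb f L = true -> In x L -> In y L -> f x = f y -> x = y.
Proof.
  unfold injective_onb; rewrite forallb_forall; intros C Hx Hy E.
  specialize (C (x, f x) (in_map (fun x => (x, f x)) L x Hx)).
  rewrite forallb_forall in C.
  specialize (C (y, f y) (in_map (fun x => (x, f x)) L y Hy)); simpl in C.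
  rewrite E in C. replace (word_eqb (f y) (f y)) with true in C
    by (symmetry; now apply word_eqb_eq).
  now apply word_eqb_eq.
Qed.

Lemma act_rel0_check :
  forallb (fun P => forallb (fun st =>
    word_eqb (fold_left act (fst st) P) (fold_left act (snd st) P)) relations)
    short_stacks = true.
Proof. vm_compute. reflexivity. Qed.

Lemma top_normal_act_check :
  forallb (fun P => forallb (fun g => top_normalb (act P g)) gens) short_stacks = true.
Proof. vm_compute. reflexivity. Qed.

Lemma act_inj_check :
  forallb (fun g => injective_onb (fun P => act P g) (filter top_normalb short_stacks))
    gens = true.
Proof. vm_compute. reflexivity. Qed.

Lemma fold_act_rel0_short (s t P : word) :
  length P <= 2 -> rel0 s t -> fold_left act s P = fold_left act t P.
Proof.
  intros HP Hst. pose proof act_rel0_check as C.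
  rewrite forallb_forall in C. specialize (C P (in_short_stacks P HP)).
  rewrite forallb_forall in C. apply word_eqb_eq, (C (s, t)), in_relations, Hst.
Qed.

Lemma top_normalb_act_short (P : word) (g : gen) :
  length P <= 2 -> top_normalb (act P g) = true.
Proof.
  intros HP. pose proof top_normal_act_check as C.
  rewrite forallb_forall in C. specialize (C P (in_short_stacks P HP)).
  rewrite forallb_forall in C. apply C, in_gens.
Qed.

Lemma act_inj_short (P P' : word) (g : gen) :
  length P <= 2 -> length P' <= 2 -> top_normalb P = true -> top_normalb P' = true ->
  act P g = act P' g -> P = P'.
Proof.
  intros HP HP' NP NP'. pose proof act_inj_check as C.
  rewrite forallb_forall in C.
  apply (injective_onb_inj _ _ _ _ (C g (in_gens g))); apply filter_In;
    auto using in_short_stacks.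
Qed.

Lemma fold_act_rel0 (s t P : word) :
  rel0 s t -> fold_left act s P = fold_left act t P.
Proof.
  intros Hst. destruct (Nat.le_gt_cases (length P) 2) as [HP | HP].
  - now apply fold_act_rel0_short.
  - destruct (split_long_stack P HP) as (M & R & -> & HM).
    rewrite !fold_act_app by lia. f_equal. apply fold_act_rel0_short; [lia | exact Hst].
Qed.

Lemma top_normalb_act (P : word) (g : gen) : top_normalb (act P g) = true.
Proof.
  destruct (Nat.le_gt_cases (length P) 2) as [HP | HP].
  - now apply top_normalb_act_short.
  - destruct (split_long_stack P HP) as (M & R & -> & HM).
    rewrite act_app, top_normalb_app by (rewrite ?length_act; lia).
    apply top_normalb_act_short; lia.
Qed.

Lemma act_inj (P P' : word) (g : gen) :
  top_normalb P = true -> top_normalb P' = true -> act P g = act P' g -> P = P'.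
Proof.
  intros HP HP' E.
  assert (Hl : length P = length P').
  { apply (f_equal (@length gen)) in E. rewrite !length_act in E. lia. }
  destruct (Nat.le_gt_cases (length P) 2) as [HPl | HPl].
  - apply (act_inj_short P P' g); auto; lia.
  - destruct (split_long_stack P HPl) as (M & R & -> & HM).
    destruct (split_long_stack P' ltac:(lia)) as (M' & R' & -> & HM').
    rewrite !act_app in E by lia.
    apply app_inj_length in E as [Etop <-]; [|rewrite !length_act; lia].
    rewrite top_normalb_app in HP, HP' by lia.
    f_equal. apply (act_inj_short M M' g); auto; lia.
Qed.

Theorem mainTheorem11 :
  forall u v x : word, mcong (u ++ x) (v ++ x) -> mcong u v.
Proof.
  intros u v x.
  apply (mcong_cancel_r word act [] (fun P => top_normalb P = true) (@rev gen)).
  - intros s t P _. apply fold_act_rel0.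
  - reflexivity.
  - intros P g _. apply top_normalb_act.
  - apply act_inj.
  - apply mcong_rev_fold_act.
Qed.
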